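(* Let $A$ be an independent set in $G(n,4,1)$, and let $A_0$, $k$, $A_2$ be as in the context. Then $|A_2|\le 2k^2+o(n^2)$, where the $o(n^2)$ term (as $n\to\infty$) does not depend on $A$ or on the choice of $A_0$.
   Context: $G(n,4,1)$ is the graph on the $4$-element subsets of $[n]$ in which two are adjacent iff they intersect in exactly one element. Let $A_0=\{v_1,\dots,v_k\}\subset A$ be a subfamily of pairwise disjoint sets of maximum possible cardinality, and let $A_2$ be the set of $v\in A\setminus A_0$ that intersect exactly two of the sets $v_1,\dots,v_k$. *)

From mathcomp Require Import all_boot all_order all_algebra.
Set Implicit Arguments. Unset Strict Implicit. Unset Printing Implicit Defensive.

(* Vertices of G(n,4,1): 4-element subsets of [n] = 'I_n.
   Adjacency: intersect in exactly one element. *)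
Definition G41_adj (n : nat) (u v : {set 'I_n}) : bool := #|u :&: v| == 1.

Definition G41_indep (n : nat) (A : {set {set 'I_n}}) : Prop :=
  (forall v, v \in A -> #|v| = 4) /\
  (forall u v, u \in A -> v \in A -> ~~ G41_adj u v).

Definition disj_subfam (n : nat) (A B : {set {set 'I_n}}) : Prop :=
  B \subset A /\
  (forall u v, u \in B -> v \in B -> u != v -> [disjoint u & v]).

Definition max_disj_subfam (n : nat) (A A0 : {set {set 'I_n}}) : Prop :=
  disj_subfam A A0 /\ (forall B, disj_subfam A B -> #|B| <= #|A0|).

Definition A2_of (n : nat) (A A0 : {set {set 'I_n}}) : {set {set 'I_n}} :=
  [set v in A :\: A0 | #|[set w in A0 | ~~ [disjoint v & w]]| == 2].

From mathcomp Require Import all_boot all_order all_algebra.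
Import Order.TTheory GRing.Theory Num.Theory.
From mathcomp Require Import zify.
Set Implicit Arguments. Unset Strict Implicit. Unset Printing Implicit Defensive.

(** Let [v] in [A_2] meet [w, u] in [A_0]. By independence [v] meets each in
   two points, so [v] is the union of the traces [v ∩ w] and [v ∩ u]. Call [w]
   branching when it is paired in this way with two different partners. The
   traces on a branching [w] meet pairwise in 0 or 2 points (never 1, again by
   independence), so they are at most two disjoint pairs; hence all traces on
   branching sets form a pool of at most [2k] pairs, and the [v] whose two
   partners both branch are determined by two pool elements: there are at most
   [C(2k, 2) <= 2k^2] of them. Any other [v] lies in [w ∪ u] for the unique
   partner [u] of a non-branching [w], which leaves at most [2^8] choices per
   [w], i.e. [O(k) = O(n)] in total. *)

Lemma card_bigcup_leq (I T : finType) (J : {set I}) (F : I -> {set T}) c :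
  {in J, forall i, #|F i| <= c} -> #|\bigcup_(i in J) F i| <= #|J| * c.
Proof.
move=> Fc; apply: (@leq_trans (\sum_(i in J) #|F i|)).
  elim/big_rec2: _ => [|i X s _ IH]; first by rewrite cards0.
  by rewrite cardsU (leq_trans (leq_subr _ _)) // leq_add2l.
by rewrite -sum_nat_const leq_sum.
Qed.

Lemma trivIset_card_leq (T : finType) (P : {set {set T}}) (W : {set T}) m :
  trivIset P -> {in P, forall B : {set T}, #|B| = m} -> cover P \subset W ->
  #|P| * m <= #|W|.
Proof.
move=> tiP Pm PW.
by rewrite -sum_nat_const -(eq_bigr _ Pm) (eqP tiP) subset_leq_card.
Qed.

Lemma card2_setI0 (T : finType) (a b : {set T}) :
  #|a| = 2 -> #|b| = 2 -> a != b -> #|a :&: b| != 1 -> a :&: b = set0.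
Proof.
move=> a2 b2 neq_ab ab_n1; apply/eqP; rewrite -cards_eq0.
have : #|a :&: b| <= 2 by rewrite -a2 subset_leq_card ?subsetIl.
have ab_n2 : #|a :&: b| != 2.
  apply: contra neq_ab => /eqP ab2.
  have /eqP ea : a :&: b == a by rewrite eqEcard subsetIl a2 ab2.
  have /eqP eb : a :&: b == b by rewrite eqEcard subsetIr b2 ab2.
  by rewrite -ea eb.
by move: ab_n1 ab_n2; case: #|_| => [|[|[|]]].
Qed.

Lemma card4_meet1_transfer (T : finType) (W a b c : {set T}) : #|W| = 4 ->
  a \subset W -> b \subset W -> c \subset W ->
  #|a| = 2 -> #|b| = 2 -> #|c| = 2 -> #|a :&: b| = 1 ->
  #|a :&: c| = 1 \/ #|b :&: c| = 1.
Proof.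
move=> W4 aW bW cW a2 b2 c2 ab1.
have [|ac_n1] := eqVneq #|a :&: c| 1; first by left.
have [|bc_n1] := eqVneq #|b :&: c| 1; first by right.
exfalso.
have neq_ac : a != c by apply: contra bc_n1 => /eqP <-; rewrite setIC ab1.
have neq_bc : b != c by apply: contra ac_n1 => /eqP <-; rewrite ab1.
have ac0 := card2_setI0 a2 c2 neq_ac ac_n1.
have bc0 := card2_setI0 b2 c2 neq_bc bc_n1.
have : #|c :|: (a :|: b)| <= #|W| by rewrite subset_leq_card // !subUset cW aW bW.
by rewrite W4 cardsU cardsU a2 b2 c2 ab1 setIUr setIC ac0 setIC bc0 setU0 cards0.
Qed.

Lemma double_bin2_leq m : 'C(m, 2) * 2 <= m ^ 2.
Proof. by rewrite mulnC -(mul_bin_diag m 1) bin1 leq_mul2l leq_pred orbT. Qed.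

Lemma natr_linear_le_eps_sqr (c : nat) (eps : rat) : (0 < eps)%R ->
  exists N, forall n, N <= n -> ((c * n)%:R <= eps * (n ^ 2)%:R)%R.
Proof.
move=> eps_gt0.
have ce_ge0 : (0 <= c%:R / eps)%R by rewrite divr_ge0 ?ler0n ?ltW.
exists (Num.Def.archi_bound (c%:R / eps)) => n le_Nn.
have lt_ce_n : (c%:R / eps < n%:R)%R.
  by apply: lt_le_trans (archi_boundP ce_ge0) _; rewrite ler_nat.
rewrite natrM natrX expr2 mulrA ler_wpM2r ?ler0n // ltW // mulrC.
by rewrite -ltr_pdivrMr.
Qed.

Section IndependentFamily.

Variables (n : nat) (A A0 : {set {set 'I_n}}).
Hypotheses (indepA : G41_indep A) (disjA0 : disj_subfam A A0).

Local Notation A2 := (A2_of A A0).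

Lemma card_A v : v \in A -> #|v| = 4.
Proof. by case: indepA => /(_ v). Qed.

Lemma A0_sub w : w \in A0 -> w \in A.
Proof. by case: disjA0 => /subsetP A0A _ /A0A. Qed.

Lemma A0_setI0 u w : u \in A0 -> w \in A0 -> u != w -> u :&: w = set0.
Proof. by case: disjA0 => _ dis uA0 wA0 neq_uw; apply/disjoint_setI0/dis. Qed.

Lemma A_setI_neq1 u v : u \in A -> v \in A -> #|u :&: v| != 1.
Proof. by case: indepA => _ /[apply] /[apply]. Qed.

Lemma card_A0 : 4 * #|A0| <= n.
Proof.
have tiA0 : trivIset A0.
  by apply/trivIsetP => u w uA0 wA0 neq_uw; rewrite -setI_eq0 A0_setI0.
have : #|A0| * 4 <= #|cover A0| by apply: trivIset_card_leq => // w /A0_sub /card_A.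
by rewrite mulnC => /leq_trans; apply; rewrite -[X in _ <= X]card_ord max_card.
Qed.

Definition meets (v : {set 'I_n}) := [set w in A0 | ~~ [disjoint v & w]].

Lemma meets_A0 v w : w \in meets v -> w \in A0.
Proof. by rewrite inE => /andP[]. Qed.

Lemma meets_card_setI_ge2 v w : v \in A -> w \in meets v -> 2 <= #|v :&: w|.
Proof.
move=> vA; rewrite inE => /andP[wA0 meet_vw].
have : #|v :&: w| != 0 by rewrite cards_eq0 setI_eq0.
by move: (A_setI_neq1 vA (A0_sub wA0)); case: #|_| => [|[|]].
Qed.

Lemma A2_facts v : v \in A2 -> v \in A /\ #|meets v| = 2.
Proof. by rewrite inE inE => /andP[/andP[_ ->] /eqP]. Qed.

Definition links (v w u : {set 'I_n}) : bool :=
  [&& v \in A2, meets v == [set w; u] & u != w].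

Lemma links_of_meets v w : v \in A2 -> w \in meets v -> exists u, links v w u.
Proof.
move=> vA2 wv; have [_ /eqP/cards2P [x [y [neq_xy mv]]]] := A2_facts vA2.
move: wv; rewrite mv !inE => /orP[] /eqP ->.
  by exists y; rewrite /links vA2 mv eqxx eq_sym.
by exists x; rewrite /links vA2 mv setUC eqxx.
Qed.

Lemma links_facts v w u : links v w u ->
  [/\ v \in A, w \in A0, u \in A0, #|v :&: w| = 2 & v \subset w :|: u].
Proof.
case/and3P => vA2 /eqP mv neq_uw; have [vA _] := A2_facts vA2.
have wv : w \in meets v by rewrite mv !inE eqxx.
have uv : u \in meets v by rewrite mv !inE eqxx orbT.
have wu0 : w :&: u = set0 by rewrite A0_setI0 ?(meets_A0 wv) ?(meets_A0 uv) // eq_sym.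
have card_vwu : #|v :&: (w :|: u)| = #|v :&: w| + #|v :&: u|.
  by rewrite setIUr cardsU setIACA wu0 setI0 cards0 subn0.
have : #|v :&: (w :|: u)| <= 4 by rewrite -(card_A vA) subset_leq_card ?subsetIl.
have := meets_card_setI_ge2 vA wv; have := meets_card_setI_ge2 vA uv.
rewrite card_vwu => vu2 vw2 le4.
have vw_eq2 : #|v :&: w| = 2 by lia.
split=> //; [exact: meets_A0 wv | exact: meets_A0 uv |].
apply/setIidPl/eqP; rewrite eqEcard subsetIl card_vwu card_A //; lia.
Qed.

Lemma links_setI0 v w u : links v w u -> w :&: u = set0.
Proof.
move=> vwu; have [_ wA0 uA0 _ _] := links_facts vwu.
by case/and3P: vwu => _ _ neq_uw; rewrite A0_setI0 // eq_sym.
Qed.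

Lemma A2_links v : v \in A2 -> exists w u, links v w u.
Proof.
move=> vA2; have [_ /eqP/cards2P [w [u [_ mv]]]] := A2_facts vA2.
have wv : w \in meets v by rewrite mv !inE eqxx.
by have [u' vwu'] := links_of_meets vA2 wv; exists w, u'.
Qed.

(* [v ∩ v'] lies inside [w], since the partners [u] and [u'] are disjoint. *)
Lemma links_setI_neq1 v v' w u u' : links v w u -> links v' w u' -> u != u' ->
  #|(v :&: w) :&: (v' :&: w)| != 1.
Proof.
move=> vwu v'wu' neq_uu'.
have [vA _ uA0 _ v_wu] := links_facts vwu.
have [v'A _ u'A0 _ v'_wu'] := links_facts v'wu'.
have uu'0 := A0_setI0 uA0 u'A0 neq_uu'.
have vv'_w : v :&: v' \subset w.
  apply/subsetP => x /setIP[/(subsetP v_wu) xwu /(subsetP v'_wu') xwu'].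
  move: xwu xwu'; rewrite !inE; case: (x \in w) => //= xu xu'.
  have : x \in u :&: u' by rewrite inE xu xu'.
  by rewrite uu'0 inE.
by rewrite setIACA setIid (setIidPl vv'_w) A_setI_neq1.
Qed.

Definition branching (w : {set 'I_n}) : bool :=
  [exists v, exists v', exists u, exists u',
     [&& links v w u, links v' w u' & u != u']].

Definition A2_at (w : {set 'I_n}) := [set v in A2 | w \in meets v].

Definition traces (w : {set 'I_n}) := [set v :&: w | v in A2_at w].

Lemma traces_facts w e : e \in traces w ->
  exists v u, [/\ links v w u, e = v :&: w, e \subset w & #|e| = 2].
Proof.
case/imsetP => v; rewrite inE => /andP[vA2 wv] ->.
have [u vwu] := links_of_meets vA2 wv; have [_ _ _ vw2 _] := links_facts vwu.
by exists v, u; rewrite subsetIr.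
Qed.

Lemma traces_setI_neq1 w e e' : branching w ->
  e \in traces w -> e' \in traces w -> #|e :&: e'| != 1.
Proof.
move=> brw /traces_facts[v [u [vwu -> ew e2]]] /traces_facts[v' [u' [v'wu' -> e'w e'2]]].
have [eq_uu'|neq_uu'] := eqVneq u u'; last exact: links_setI_neq1 vwu v'wu' _.
subst u'.
(* A trace with another partner meets [e] and [e'] in 0 or 2 points each,
   which is impossible inside the 4-set [w] once [e ∩ e'] is a single point. *)
apply/eqP => ee'1.
have [q [b [qwb neq_bu]]] : exists q b, links q w b /\ b != u.
  case/existsP: brw => x /existsP[x' /existsP[a /existsP[a' /and3P[xwa x'wa' neq_aa']]]].
  have [eq_au|] := eqVneq a u; last by exists x, a.
  by exists x', a'; rewrite -eq_au eq_sym.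
have [_ wA0 _ _ _] := links_facts vwu; have [_ _ _ qw2 _] := links_facts qwb.
have [] := card4_meet1_transfer (card_A (A0_sub wA0)) ew e'w (subsetIr q w)
  e2 e'2 qw2 ee'1.
  by apply/eqP; rewrite setIC (links_setI_neq1 qwb vwu).
by apply/eqP; rewrite setIC (links_setI_neq1 qwb v'wu').
Qed.

Lemma card_traces w : w \in A0 -> branching w -> #|traces w| <= 2.
Proof.
move=> wA0 brw.
have tiw : trivIset (traces w).
  apply/trivIsetP => e e' ew e'w neq_ee'; rewrite -setI_eq0.
  have [_ [_ [_ _ _ e2]]] := traces_facts ew.
  have [_ [_ [_ _ _ e'2]]] := traces_facts e'w.
  by rewrite (card2_setI0 e2 e'2 neq_ee' (traces_setI_neq1 brw ew e'w)).
have cover_w : cover (traces w) \subset w.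
  by apply/bigcupsP => e /traces_facts[_ [_ [_ _ ew _]]].
have traces2 : {in traces w, forall e : {set 'I_n}, #|e| = 2}.
  by move=> e /traces_facts[_ [_ [_ _ _ e2]]].
have := trivIset_card_leq tiw traces2 cover_w.
by rewrite card_A ?A0_sub // -[4]/(2 * 2) leq_pmul2r.
Qed.

Definition pool := \bigcup_(w in [set w in A0 | branching w]) traces w.

Lemma card_pool : #|pool| <= #|A0| * 2.
Proof.
apply: leq_trans (card_bigcup_leq _) _.
  by move=> w; rewrite inE => /andP[]; exact: card_traces.
rewrite leq_mul2r subset_leq_card ?orbT //.
by apply/subsetP => w; rewrite inE => /andP[].
Qed.

Definition rich := [set v in A2 | [forall w in meets v, branching w]].

Definition trace_pair (v : {set 'I_n}) := [set v :&: w | w in meets v].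

Lemma trace_pair_links v w u : links v w u ->
  trace_pair v = [set v :&: w; v :&: u].
Proof. by case/and3P => _ /eqP mv _; rewrite /trace_pair mv imsetU1 imset_set1. Qed.

Lemma card_trace_pair v : v \in A2 -> #|trace_pair v| = 2.
Proof.
case/A2_links => w [u vwu]; rewrite (trace_pair_links vwu) cards2.
have [_ _ _ vw2 _] := links_facts vwu.
suff -> : v :&: w != v :&: u by [].
apply/eqP => eq_vwu.
have : v :&: w \subset w :&: u by rewrite subsetI subsetIr eq_vwu subsetIr.
by rewrite (links_setI0 vwu) subset0 -cards_eq0 vw2.
Qed.

Lemma cover_trace_pair v : v \in A2 -> cover (trace_pair v) = v.
Proof.
case/A2_links => w [u vwu]; have [_ _ _ _ v_wu] := links_facts vwu.
rewrite (trace_pair_links vwu) /cover bigcup_setU !big_set1 -setIUr.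
exact/setIidPl.
Qed.

Lemma trace_pair_sub_pool v : v \in rich -> trace_pair v \subset pool.
Proof.
case/setIdP => vA2 /forall_inP brv.
apply/subsetP => _ /imsetP[w wv ->].
apply/bigcupP; exists w; first by rewrite inE (meets_A0 wv) brv.
by apply: imset_f; rewrite inE vA2.
Qed.

Lemma card_rich : #|rich| <= 'C(#|pool|, 2).
Proof.
have inj_trace_pair : {in rich &, injective trace_pair}.
  move=> v v' /setIdP[vA2 _] /setIdP[v'A2 _] eq_vv'.
  by rewrite -(cover_trace_pair vA2) eq_vv' cover_trace_pair.
rewrite -cards_draws -(card_in_imset inj_trace_pair) subset_leq_card //.
apply/subsetP => _ /imsetP[v vrich ->].
have /setIdP[vA2 _] := vrich.
by rewrite inE trace_pair_sub_pool // card_trace_pair.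
Qed.

Lemma card_A2_at w : w \in A0 -> ~~ branching w -> #|A2_at w| <= 2 ^ 8.
Proof.
move=> wA0 nbrw.
have [->|[v0 /setIdP[v0A2 wv0]]] := set_0Vmem (A2_at w); first by rewrite cards0.
have [u0 v0wu0] := links_of_meets v0A2 wv0; have [_ _ u0A0 _ _] := links_facts v0wu0.
have A2w_sub : A2_at w \subset powerset (w :|: u0).
  apply/subsetP => v /setIdP[vA2 wv]; rewrite powersetE.
  have [u vwu] := links_of_meets vA2 wv.
  have [<-|neq_uu0] := eqVneq u u0; first by have [] := links_facts vwu.
  case/negP: nbrw; apply/existsP; exists v; apply/existsP; exists v0.
  by apply/existsP; exists u; apply/existsP; exists u0; rewrite vwu v0wu0.
apply: leq_trans (subset_leq_card A2w_sub) _.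
rewrite card_powerset leq_exp2l // cardsU.
by rewrite (card_A (A0_sub wA0)) (card_A (A0_sub u0A0)) leq_subr.
Qed.

Lemma card_A2_poor : #|A2 :\: rich| <= #|A0| * 2 ^ 8.
Proof.
set poor := [set w in A0 | ~~ branching w].
have A2_poor_sub : A2 :\: rich \subset \bigcup_(w in poor) A2_at w.
  apply/subsetP => v /setDP[vA2 vrich].
  have : ~~ [forall w in meets v, branching w] by apply: contra vrich; rewrite inE vA2.
  case/forall_inPn => w wv nbrw; apply/bigcupP; exists w.
    by rewrite inE (meets_A0 wv).
  by rewrite inE vA2.
apply: leq_trans (subset_leq_card A2_poor_sub) _.
apply: leq_trans (card_bigcup_leq _) _.
  by move=> w /setIdP[]; exact: card_A2_at.
by rewrite leq_mul2r subset_leq_card ?orbT //; apply/subsetP => w /setIdP[].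
Qed.

Lemma card_A2 : #|A2| <= 2 * #|A0| ^ 2 + 64 * n.
Proof.
have A2_split : #|A2| <= #|rich| + #|A2 :\: rich|.
  by rewrite -(cardsID rich A2) leq_add2r subset_leq_card ?subsetIr.
have pool2 : 'C(#|pool|, 2) * 2 <= #|A0| ^ 2 * 2 ^ 2.
  by rewrite -expnMn (leq_trans (double_bin2_leq _)) // leq_exp2r // card_pool.
have := card_rich; have := card_A2_poor; have := card_A0; lia.
Qed.

End IndependentFamily.

Theorem lemma5 :
  exists f : nat -> nat,
    (forall eps : rat, (0 < eps)%R ->
       exists N : nat, forall n : nat, (N <= n)%N ->
         ((f n)%:R <= eps * (n ^ 2)%:R)%R) /\
    (forall (n : nat) (A A0 : {set {set 'I_n}}),
       G41_indep A -> max_disj_subfam A A0 ->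
       (#|A2_of A A0| <= 2 * #|A0| ^ 2 + f n)%N).
Proof.
exists (muln 64); split; first exact: natr_linear_le_eps_sqr.
by move=> n A A0 indepA [disjA0 _]; exact: card_A2.
Qed.
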